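(* Let $g$ be a semi-consistent piece-wise quadratic function with breakpoints $-\infty=\tau_0<\tau_1<\dots<\tau_N=+\infty$ and pieces $p_1,\dots,p_N$. For any $1\le k<l\le N$, the pieces $k$ and $l$ have at most one feasible common tangent.
   Context: A continuous $g$ is piece-wise quadratic with $N$ pieces if $g=p_k$ on $[\tau_{k-1},\tau_k]$ for quadratic $p_k$ with $p_k\ne p_{k+1}$. Indexing function of piece-wise quadratic $h$ with strongly convex pieces: $I_h(\beta)=\min\{k:\exists\,\alpha^\star\in\arg\max_\alpha\{\beta\alpha-h(\alpha)\},\ \tau_{k-1}\le\alpha^\star\le\tau_k\}$. $g$ is semi-consistent if: (i) all $p_k$ are strongly convex; (ii) $p_k(\alpha)\le\min\{p_{k-1}(\alpha),p_{k+1}(\alpha)\}$ for $\alpha\in[\tau_{k-1},\tau_k]$, $2\le k\le N-1$; (iii) for every $k\le N$, $I_{g_k}$ is non-decreasing, where $g_k=g$ on $(-\infty,\tau_k]$ and $g_k=p_k$ on $(\tau_k,\infty)$. For $1\le k<l\le N$, a feasible common tangent to pieces $k$ and $l$ is a slope $s\in\mathbb{R}$ such that some line $\ell(\alpha)=s\alpha+b$ is tangent to $p_k$ at some $\alpha_k\in[\tau_{k-1},\tau_k]$ and tangent to $p_l$ at some $\alpha_l\in[\tau_{l-1},\tau_l]$ (i.e. $\ell(\alpha_k)=p_k(\alpha_k)$, $p_k'(\alpha_k)=s$, $\ell(\alpha_l)=p_l(\alpha_l)$, $p_l'(\alpha_l)=s$). *)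

From HB Require Import structures.
From mathcomp Require Import all_boot all_order all_algebra.
From mathcomp Require Import reals.
Set Implicit Arguments. Unset Strict Implicit. Unset Printing Implicit Defensive.
Import Order.TTheory GRing.Theory Num.Theory.
Local Open Scope ring_scope.

(* A piece-wise quadratic function with n pieces is encoded by
   - breakpoints tau : nat -> R, only tau 1, ..., tau (n-1) are used
     (tau 0 = -oo and tau n = +oo are implicit),
   - coefficients a b c : nat -> R, piece j (1 <= j <= n) being
     p_j(x) = a j * x^2 + b j * x + c j. *)

Section PWQ.
Variable R : realType.

Definition quad (a b c : nat -> R) (j : nat) (x : R) : R :=
  a j * x ^+ 2 + b j * x + c j.

Definition dquad (a b : nat -> R) (j : nat) (x : R) : R :=
  2%:R * a j * x + b j.

Definition in_piece (n : nat) (tau : nat -> R) (j : nat) (x : R) : Prop :=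
  ((1 < j)%N -> tau j.-1 <= x) /\ ((j < n)%N -> x <= tau j).

Fixpoint pidx_aux (tau : nat -> R) (x : R) (m j : nat) : nat :=
  match m with
  | 0 => j
  | m'.+1 => if x <= tau j then j else pidx_aux tau x m' j.+1
  end.

Definition pidx (n : nat) (tau : nat -> R) (x : R) : nat :=
  pidx_aux tau x n.-1 1.

(* the piece-wise quadratic function itself: g(x) = p_j(x) for the
   first piece j whose interval contains x (well defined by continuity) *)
Definition pwq (n : nat) (tau : nat -> R) (a b c : nat -> R) (x : R) : R :=
  quad a b c (pidx n tau x) x.

Definition is_pwq (n : nat) (tau : nat -> R) (a b c : nat -> R) : Prop :=
  (1 <= n)%N /\
  (forall k, (1 <= k)%N -> (k.+1 < n)%N -> tau k < tau k.+1) /\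
  (forall k, (1 <= k)%N -> (k < n)%N ->
     quad a b c k (tau k) = quad a b c k.+1 (tau k)) /\
  (forall k, (1 <= k)%N -> (k < n)%N ->
     (a k, b k, c k) <> (a k.+1, b k.+1, c k.+1)).

Definition is_argmax (h : R -> R) (beta x : R) : Prop :=
  forall y, beta * y - h y <= beta * x - h x.

Definition index_fun (n : nat) (tau : nat -> R) (a b c : nat -> R)
    (beta : R) (j : nat) : Prop :=
  let h := pwq n tau a b c in
  [/\ (1 <= j <= n)%N,
      (exists x, is_argmax h beta x /\ in_piece n tau j x) &
      (forall j', (1 <= j')%N -> (j' < j)%N ->
         ~ exists x, is_argmax h beta x /\ in_piece n tau j' x)].

Definition index_nondecreasing (n : nat) (tau : nat -> R) (a b c : nat -> R)
  : Prop :=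
  forall beta1 beta2 j1 j2, beta1 <= beta2 ->
    index_fun n tau a b c beta1 j1 -> index_fun n tau a b c beta2 j2 ->
    (j1 <= j2)%N.

(* g_k = g on (-oo, tau_k], p_k on (tau_k, +oo): this is the piece-wise
   quadratic function with the first k pieces of g (last one unbounded). *)
Definition semi_consistent (n : nat) (tau : nat -> R) (a b c : nat -> R)
  : Prop :=
  [/\ (forall k, (1 <= k <= n)%N -> 0 < a k),
      (forall k, (2 <= k)%N -> (k.+1 <= n)%N -> forall x,
         in_piece n tau k x ->
         quad a b c k x <= Num.min (quad a b c k.-1 x) (quad a b c k.+1 x)) &
      (forall k, (1 <= k <= n)%N -> index_nondecreasing k tau a b c)].

Definition feasible_common_tangent (n : nat) (tau : nat -> R)
    (a b c : nat -> R) (k l : nat) (s : R) : Prop :=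
  exists (b0 xk xl : R),
    [/\ in_piece n tau k xk, in_piece n tau l xl,
        s * xk + b0 = quad a b c k xk /\ dquad a b k xk = s &
        s * xl + b0 = quad a b c l xl /\ dquad a b l xl = s].

End PWQ.

From HB Require Import structures.
From mathcomp Require Import all_boot all_order all_algebra.
From mathcomp Require Import reals.
From mathcomp Require Import lra zify.
Import Order.TTheory GRing.Theory Num.Theory.
Local Open Scope ring_scope.

(* The line of slope s tangent to p(x) = a x^2 + b x + c at x has intercept
   c - a x^2 and s = 2 a x + b.  Subtracting the data of two common tangents
   with tangency points (x, y) and (x', y') gives a (x - x') = a' (y - y') and
   a (x^2 - x'^2) = a' (y^2 - y'^2); if the slopes differ then x <> x', hence
   x + x' = y + y'.  Feasibility puts x <= tau_k <= tau_(l-1) <= y and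
   x' <= y', so x = y, x' = y' and the two pieces are the same parabola.
   Strictly increasing breakpoints then force l = k + 1, contradicting
   p_k <> p_(k+1). *)

Lemma common_tangent_points_coincide {R : realFieldType} {a a' x x' y y' : R} :
  a * (x - x') != 0 ->
  a * (x - x') = a' * (y - y') ->
  a * (x ^+ 2 - x' ^+ 2) = a' * (y ^+ 2 - y' ^+ 2) ->
  x <= y -> x' <= y' -> x = y /\ x' = y'.
Proof.
move=> nz_d eq_d eq_sq le_xy le_x'y'.
have sum_eq : x + x' = y + y'.
  apply: (mulfI nz_d); rewrite [in RHS]eq_d -!mulrA -!subr_sqr.
  exact: eq_sq.
split; lra.
Qed.

Lemma common_tangent_slope_unique {R : realFieldType}
    {ak bk ck al bl cl s1 s2 xk xl yk yl : R} :
  ak != 0 ->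
  2%:R * ak * xk + bk = s1 -> 2%:R * al * xl + bl = s1 ->
  ck - ak * xk ^+ 2 = cl - al * xl ^+ 2 ->
  2%:R * ak * yk + bk = s2 -> 2%:R * al * yl + bl = s2 ->
  ck - ak * yk ^+ 2 = cl - al * yl ^+ 2 ->
  xk <= xl -> yk <= yl ->
  s1 = s2 \/ (xk = xl /\ (ak, bk, ck) = (al, bl, cl)).
Proof.
move=> ak_neq0 sk1 sl1 ck1 sk2 sl2 ck2 le_x le_y.
have [eq_xy | neq_xy] := eqVneq xk yk; first by left; rewrite -sk1 -sk2 eq_xy.
right.
have nz_d : ak * (xk - yk) != 0 by rewrite mulf_neq0 ?subr_eq0.
have eq_d : ak * (xk - yk) = al * (xl - yl) by lra.
have eq_sq : ak * (xk ^+ 2 - yk ^+ 2) = al * (xl ^+ 2 - yl ^+ 2) by lra.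
have [exl eyl] := common_tangent_points_coincide nz_d eq_d eq_sq le_x le_y.
subst xl yl; split => //.
have eq_a : ak = al.
  by apply: (mulIf (x := xk - yk)); [rewrite subr_eq0 | lra].
subst al.
have eq_b : bk = bl by lra.
by subst bl; congr (_, _, _); lra.
Qed.

Lemma tangent_intercept {R : realType} {a b c : nat -> R} {j x s b0} :
  s * x + b0 = quad a b c j x -> dquad a b j x = s ->
  b0 = c j - a j * x ^+ 2.
Proof.
rewrite /quad /dquad => on_graph slope_x.
by subst s; lra.
Qed.

Lemma feasible_common_tangent_points {R : realType} {N} {tau : nat -> R}
    {a b c : nat -> R} {k l s} :
  (1 <= k)%N -> (k < l)%N -> (l <= N)%N ->
  feasible_common_tangent N tau a b c k l s ->
  exists xk xl, [/\ xk <= tau k, tau l.-1 <= xl,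
    2%:R * a k * xk + b k = s, 2%:R * a l * xl + b l = s &
    c k - a k * xk ^+ 2 = c l - a l * xl ^+ 2].
Proof.
move=> k_ge1 lt_kl le_lN [b0 [xk [xl [[_ xk_le] [xl_ge _] [gk dk] [gl dl]]]]].
exists xk, xl; split; [apply: xk_le; lia | apply: xl_ge; lia | exact: dk | exact: dl |].
by rewrite -(tangent_intercept gk dk) -(tangent_intercept gl dl).
Qed.

Lemma breakpoint_lt {R : realType} {N} {tau : nat -> R} :
  (forall k, (1 <= k)%N -> (k.+1 < N)%N -> tau k < tau k.+1) ->
  forall i j, (1 <= i)%N -> (i < j)%N -> (j < N)%N -> tau i < tau j.
Proof.
move=> tau_step i j i_ge1 lt_ij j_lt.
apply: (@homo_ltn_in _ [pred m | 0 < m < N]%N tau _ (@lt_trans _ _));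
  rewrite ?inE //; try lia.
- by move=> m n; rewrite !inE => /andP[? ?] /andP[? ?] p /andP[? ?]; rewrite inE; lia.
- by move=> m; rewrite !inE => /andP[? ?] /andP[? ?]; apply: tau_step.
Qed.

Theorem lemma9 (R : realType) (N : nat) (tau : nat -> R) (a b c : nat -> R) :
  is_pwq N tau a b c ->
  semi_consistent N tau a b c ->
  forall k l : nat, (1 <= k)%N -> (k < l)%N -> (l <= N)%N ->
  forall s1 s2 : R,
    feasible_common_tangent N tau a b c k l s1 ->
    feasible_common_tangent N tau a b c k l s2 ->
    s1 = s2.
Proof.
move=> [_ [tau_step [_ pieces_neq]]] [a_gt0 _ _] k l k_ge1 lt_kl le_lN s1 s2.
move=> /(feasible_common_tangent_points k_ge1 lt_kl le_lN) [xk [xl [xk_le xl_ge sk1 sl1 ck1]]].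
move=> /(feasible_common_tangent_points k_ge1 lt_kl le_lN) [yk [yl [yk_le yl_ge sk2 sl2 ck2]]].
have ak_neq0 : a k != 0 by rewrite gt_eqF // a_gt0 ?k_ge1 //; lia.
have [le_x le_y] : xk <= xl /\ yk <= yl.
  have : tau k <= tau l.-1.
    have [-> // | neq_k] := eqVneq k l.-1.
    by apply/ltW/(breakpoint_lt tau_step); lia.
  split; lra.
have [// | [exl same_piece]] := common_tangent_slope_unique ak_neq0
  sk1 sl1 ck1 sk2 sl2 ck2 le_x le_y.
have l_eq : l = k.+1.
  apply/eqP; apply: contraT => l_neq.
  have : tau k < tau l.-1 by apply: (breakpoint_lt tau_step); lia.
  lra.
by subst l; case: (pieces_neq k k_ge1 le_lN).
Qed.
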